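(* Let $S$ be a submonoid of $\mathbb N^d$. Then $S$ is a PI-monoid if and only if $m(S)\in S\setminus\{0\}$ and $(S\setminus\{0\})-m(S)=\{\mathbf s-m(S):\mathbf s\in S\setminus\{0\}\}$ is a submonoid of $\mathbb N^d$.
   Context: $\preceq_{\mathbb N^d}$ is the componentwise partial order on $\mathbb N^d$; the multiplicity of $S$ is $m(S)=\inf_{\preceq_{\mathbb N^d}}(S\setminus\{0\})$. $S$ is a PI-monoid if there exist a submonoid $T$ of $\mathbb N^d$ and $\mathbf a\in T\setminus\{0\}$ with $S=(\mathbf a+T)\cup\{0\}$. *)

From mathcomp Require Import all_boot.
Set Implicit Arguments. Unset Strict Implicit. Unset Printing Implicit Defensive.

Definition vec (d : nat) := 'I_d -> nat.

Definition vzero (d : nat) : vec d := fun _ => 0.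
Definition vadd d (x y : vec d) : vec d := fun i => x i + y i.
Arguments vzero : clear implicits.
(* truncated componentwise subtraction; only used as s - m with m <= s *)
Definition vsub d (x y : vec d) : vec d := fun i => x i - y i.

Definition vle d (x y : vec d) : Prop := forall i, x i <= y i.

Definition submonoid d (S : vec d -> Prop) : Prop :=
  S (vzero d) /\ (forall x y, S x -> S y -> S (vadd x y)).

Definition nonzero_part d (S : vec d -> Prop) : vec d -> Prop :=
  fun x => S x /\ x <> vzero d.

Definition is_inf d (m : vec d) (A : vec d -> Prop) : Prop :=
  (forall a, A a -> vle m a) /\
  (forall l, (forall a, A a -> vle l a) -> vle l m).

Definition PI_monoid d (S : vec d -> Prop) : Prop :=
  exists (T : vec d -> Prop) (a : vec d),
    submonoid T /\ T a /\ a <> vzero d /\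
    (forall x, S x <-> (x = vzero d \/ exists t, T t /\ x = vadd a t)).

Definition translate_down d (A : vec d -> Prop) (m : vec d) : vec d -> Prop :=
  fun v => exists s, A s /\ v = vsub s m.

From Stdlib Require Import FunctionalExtensionality Classical.
From mathcomp Require Import all_boot.
Set Implicit Arguments. Unset Strict Implicit. Unset Printing Implicit Defensive.

(* Every element of S \ {0} lies above m = m(S), so translating S \ {0} down
   by m is inverted by translating back up, and S = (m + T) ∪ {0} for
   T = (S \ {0}) - m.  Conversely, if S = (a + T) ∪ {0} then a is the least
   element of S \ {0} and translating down by a recovers exactly T. *)

Lemma vaddv0 d (a : vec d) : vadd a (vzero d) = a.
Proof. by apply: functional_extensionality => i; rewrite /vadd addn0. Qed.

Lemma vaddKv d (m t : vec d) : vsub (vadd m t) m = t.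
Proof. by apply: functional_extensionality => i; rewrite /vadd /vsub addKn. Qed.

Lemma vsubvKC d (m x : vec d) : vle m x -> vadd m (vsub x m) = x.
Proof.
by move=> le_mx; apply: functional_extensionality => i; rewrite /vadd /vsub subnKC.
Qed.

Lemma vaddvI d (a x y : vec d) : vadd a x = vadd a y -> x = y.
Proof. by move=> e; rewrite -(vaddKv a x) e vaddKv. Qed.

Lemma vle_addr d (a t : vec d) : vle a (vadd a t).
Proof. by move=> i; apply: leq_addr. Qed.

Lemma vadd_neq0l d (a t : vec d) : a <> vzero d -> vadd a t <> vzero d.
Proof.
move=> a_neq0 e; apply: a_neq0; apply: functional_extensionality => i.
have /eqP := f_equal (fun f => f i) e.
by rewrite /vadd /vzero addn_eq0 => /andP [/eqP -> _].
Qed.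

Lemma is_inf_mem d (m : vec d) (A : vec d -> Prop) :
  A m -> (forall a, A a -> vle m a) -> is_inf m A.
Proof. by move=> Am lbA; split=> // l; apply. Qed.

Lemma translate_downP d (A : vec d -> Prop) (m x : vec d) :
  (forall a, A a -> vle m a) -> translate_down A m x <-> A (vadd m x).
Proof.
move=> lbA; split=> [[s [As ->]]|Amx]; first by rewrite vsubvKC //; apply: lbA.
by exists (vadd m x); rewrite vaddKv.
Qed.

Lemma submonoid_ext d (A B : vec d -> Prop) :
  (forall x, A x <-> B x) -> submonoid A -> submonoid B.
Proof.
move=> eqAB [A0 addA]; split; first exact/eqAB.
by move=> x y /eqAB Ax /eqAB Ay; apply/eqAB/addA.
Qed.

Section PIMonoidInf.

Variables (d : nat) (S T : vec d -> Prop) (a : vec d).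
Hypotheses (monoidT : submonoid T) (a_neq0 : a <> vzero d)
  (defS : forall x, S x <-> (x = vzero d \/ exists t, T t /\ x = vadd a t)).

Lemma PI_nonzero_partP x : nonzero_part S x <-> exists t, T t /\ x = vadd a t.
Proof.
split=> [[/defS [-> //|//]]|[t [Tt ->]]].
by split; [apply/defS; right; exists t | exact: vadd_neq0l].
Qed.

Lemma PI_nonzero_part_lb x : nonzero_part S x -> vle a x.
Proof. by move=> /PI_nonzero_partP [t [_ ->]]; apply: vle_addr. Qed.

Lemma PI_nonzero_part_self : nonzero_part S a.
Proof.
apply/PI_nonzero_partP; exists (vzero d); rewrite vaddv0.
by split=> //; case: monoidT.
Qed.

Lemma PI_is_inf : is_inf a (nonzero_part S).
Proof. exact: is_inf_mem PI_nonzero_part_self PI_nonzero_part_lb. Qed.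

Lemma PI_translate_downP x : translate_down (nonzero_part S) a x <-> T x.
Proof.
rewrite (translate_downP _ PI_nonzero_part_lb) PI_nonzero_partP.
by split=> [[t [Tt /vaddvI ->]] | Tx]; last by exists x.
Qed.

End PIMonoidInf.

Section InfPIMonoid.

Variables (d : nat) (S : vec d -> Prop) (m : vec d).
Hypotheses (monoidS : submonoid S) (Sm : nonzero_part S m)
  (m_lb : forall x, nonzero_part S x -> vle m x).

Lemma translate_down_inf_self : translate_down (nonzero_part S) m m.
Proof.
apply/(translate_downP _ m_lb); case: monoidS Sm => _ addS [S_m m_neq0].
by split; [exact: addS | exact: vadd_neq0l].
Qed.

Lemma inf_PI_decomposition x :
  S x <-> (x = vzero d \/
           exists t, translate_down (nonzero_part S) m t /\ x = vadd m t).
Proof.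
split=> [Sx | [-> | [t [/(translate_downP _ m_lb) [Smt _] ->]]] //].
- have [-> | x_neq0] := classic (x = vzero d); first by left.
  right; exists (vsub x m); rewrite vsubvKC; last exact: m_lb.
  by split=> //; exists x.
- by case: monoidS.
Qed.

End InfPIMonoid.

Theorem proposition5p5 (d : nat) (S : vec d -> Prop) (hS : submonoid S) :
  PI_monoid S <->
  exists m : vec d,
    is_inf m (nonzero_part S) /\ nonzero_part S m /\
    submonoid (translate_down (nonzero_part S) m).
Proof.
split.
- move=> [T [a [monoidT [_ [a_neq0 defS]]]]].
  exists a; split; first exact: PI_is_inf monoidT a_neq0 defS.
  split; first exact: PI_nonzero_part_self monoidT a_neq0 defS.
  apply: submonoid_ext monoidT => x.
  exact: iff_sym (PI_translate_downP a_neq0 defS x).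
- move=> [m [[m_lb _] [Sm monoid_down]]].
  exists (translate_down (nonzero_part S) m), m.
  split=> //; split; first exact: translate_down_inf_self.
  split; first by case: Sm.
  exact: inf_PI_decomposition.
Qed.
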